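(* In $\mathfrak A_n$, for $i=1,\dots,n-1$, with $F_i=\tau_i(\pi_i^2-\pi_{i+1}^2)+(\pi_{i+1}-\pi_i)$, the following hold: $\tau_i\pi_i+\pi_{i+1}\tau_i=1$; $(\pi_i-\pi_{i+1})\tau_i=\tau_i(\pi_i-\pi_{i+1})$; $(\pi_i^2-\pi_{i+1}^2)\tau_i+\tau_i(\pi_i^2-\pi_{i+1}^2)=2(\pi_i-\pi_{i+1})$; $F_i\pi_i+\pi_{i+1}F_i=0$; $F_i\pi_{i+1}+\pi_iF_i=0$; and $F_i^2=\pi_i^2+\pi_{i+1}^2-(\pi_i^2-\pi_{i+1}^2)^2$.
   Context: $\mathfrak A_n$ is the $\mathbb C$-algebra generated by $\tau_1,\dots,\tau_{n-1}$ with relations $\tau_k^2=1$, $(\tau_k\tau_{k+1})^3=1$, $(\tau_k\tau_l)^2=-1$ for $|k-l|>1$. Set $\tau_{i,i+1}=\tau_i$, $\tau_{ij}=-\tau_{i,j-1}\tau_{j-1}\tau_{i,j-1}$ for $i<j-1$, $\tau_{ji}=-\tau_{ij}$, and $\pi_k=\tau_{1k}+\dots+\tau_{k-1,k}$ ($\pi_1=0$). *)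

From HB Require Import structures.
From mathcomp Require Import all_boot all_order all_algebra all_field.
Set Implicit Arguments. Unset Strict Implicit. Unset Printing Implicit Defensive.
Import GRing.Theory.
Local Open Scope ring_scope.

Section AlgA.
Variable A : algType algC.

(* t k stands for the generator tau_k, meaningful for 1 <= k <= n-1. *)
Definition A_rels (n : nat) (t : nat -> A) : Prop :=
  [/\ (forall k, (1 <= k)%N -> (k <= n.-1)%N -> t k * t k = 1),
      (forall k, (1 <= k)%N -> (k.+1 <= n.-1)%N -> (t k * t k.+1) ^+ 3 = 1) &
      (forall k l, (1 <= k)%N -> (k <= n.-1)%N -> (1 <= l)%N -> (l <= n.-1)%N ->
         (k.+1 < l)%N \/ (l.+1 < k)%N -> (t k * t l) ^+ 2 = -1)].

(* tauD t i d = tau_{i, i+d+1} *)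
Fixpoint tauD (t : nat -> A) (i d : nat) : A :=
  match d with
  | 0 => t i
  | d'.+1 => - (tauD t i d' * t (i + d'.+1)%N * tauD t i d')
  end.

(* tau_{ij}, with tau_{ji} = - tau_{ij}; tau_{ii} is not used (set to 0). *)
Definition tauA (t : nat -> A) (i j : nat) : A :=
  if (i < j)%N then tauD t i (j - i).-1
  else if (j < i)%N then - tauD t j (i - j).-1 else 0.

Definition piA (t : nat -> A) (k : nat) : A := \sum_(1 <= i < k) tauA t i k.

End AlgA.

From HB Require Import structures.
From mathcomp Require Import all_boot all_order all_algebra all_field.
Import GRing.Theory.
Local Open Scope ring_scope.
Set Implicit Arguments.
Unset Strict Implicit.
Unset Printing Implicit Defensive.

(* Write {x, y} = x y + y x for the anticommutator and c x c for the
   "sandwich" of x by c; when c is an involution, x |-> c x c is a ring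
   automorphism.  The proof has three layers.

   1. Generic ring facts about anticommutators and sandwiches by involutions.
   2. In A_n, by induction on j: tau_{ij} is an involution anticommuting with
      t_l for l > j, it braids with t_j, hence tau_{i,j+1} = - t_j tau_{ij} t_j,
      and tau_{ij}, tau_{k,j+1} anticommute for i <> k.  Summing over i gives
        pi_{i+1} = t_i - t_i pi_i t_i     and     {pi_i, pi_{i+1}} = 0.
   3. For any ring elements s, p, q with s^2 = 1, q = s - s p s and {p, q} = 0,
      all six identities of the theorem hold; this is pure algebra.
   The theorem is layer 3 applied to s = t_i, p = pi_i, q = pi_{i+1}. *)

Section Sandwich.
Variable R : pzRingType.
Implicit Types a c x y z : R.

Definition sandwich c x := c * x * c.

Definition acomm x y := x * y + y * x.

Lemma acommC x y : acomm x y = acomm y x.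
Proof. exact: addrC. Qed.

Lemma acommNl x y : acomm (- x) y = - acomm x y.
Proof. by rewrite /acomm mulNr mulrN opprD. Qed.

Lemma acommNr x y : acomm x (- y) = - acomm x y.
Proof. by rewrite acommC acommNl acommC. Qed.

Lemma acommBr x y z : acomm x (y - z) = acomm x y - acomm x z.
Proof. by rewrite /acomm mulrBr mulrBl addrACA opprD. Qed.

Lemma acomm_suml (I : Type) (r : seq I) (P : pred I) (F : I -> R) y :
  acomm (\sum_(i <- r | P i) F i) y = \sum_(i <- r | P i) acomm (F i) y.
Proof. by rewrite /acomm mulr_suml mulr_sumr -big_split. Qed.

Lemma acomm_sumr (I : Type) (r : seq I) (P : pred I) (F : I -> R) x :
  acomm x (\sum_(i <- r | P i) F i) = \sum_(i <- r | P i) acomm x (F i).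
Proof. by rewrite acommC acomm_suml; apply: eq_bigr => i _; rewrite acommC. Qed.

Lemma acomm_swap x y : acomm x y = 0 -> x * y = - (y * x).
Proof. by move/eqP; rewrite addr_eq0 => /eqP. Qed.

Lemma acomm_sandwich_of_acomm a x y :
  acomm a x = 0 -> acomm a y = 0 -> acomm a (sandwich x y) = 0.
Proof.
move=> /acomm_swap ax /acomm_swap ay.
rewrite /acomm /sandwich !mulrA ax mulNr -(mulrA x a) ay mulrN !mulNr opprK.
by rewrite -!mulrA ax !mulrN !mulrA addNr.
Qed.

Lemma sq_comm_of_acomm x y : acomm x y = 0 -> x ^+ 2 * y = y * x ^+ 2.
Proof.
move/acomm_swap=> xy.
by rewrite expr2 -mulrA xy mulrN mulrA xy mulNr opprK mulrA.
Qed.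

Lemma sqrB_acomm x y : acomm x y = 0 -> (x - y) ^+ 2 = x ^+ 2 + y ^+ 2.
Proof.
move=> xy; rewrite expr2 mulrBl !mulrBr opprB addrACA -opprD -/(acomm x y) xy.
by rewrite oppr0 addr0 !expr2.
Qed.

Lemma diff_sq_l x y : (x - y) * y + x * (x - y) = x ^+ 2 - y ^+ 2.
Proof. by rewrite mulrBl mulrBr addrC subrKA !expr2. Qed.

Lemma diff_sq_r x y : (x - y) * x + y * (x - y) = x ^+ 2 - y ^+ 2.
Proof. by rewrite mulrBl mulrBr subrKA !expr2. Qed.

Lemma sq_twist s x y : x * s + s * y = 1 -> x ^+ 2 * s = x - y + s * y ^+ 2.
Proof.
move=> h; have xs : x * s = 1 - s * y by rewrite -h addrK.
rewrite expr2 -mulrA xs mulrBr mulr1 mulrA xs mulrBl mul1r -mulrA -expr2.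
by rewrite opprB addrA addrAC.
Qed.

Lemma sandwich0 c : sandwich c 0 = 0.
Proof. by rewrite /sandwich mulr0 mul0r. Qed.

Lemma sandwichN c x : sandwich c (- x) = - sandwich c x.
Proof. by rewrite /sandwich mulrN mulNr. Qed.

Lemma sandwichNl c x : sandwich (- c) x = sandwich c x.
Proof. by rewrite /sandwich mulNr mulrNN. Qed.

Lemma sandwich_sum (I : Type) (r : seq I) (P : pred I) (F : I -> R) c :
  sandwich c (\sum_(i <- r | P i) F i) = \sum_(i <- r | P i) sandwich c (F i).
Proof. by rewrite /sandwich mulr_sumr mulr_suml. Qed.

Lemma sandwich_sandwich c x y :
  sandwich (sandwich c x) y = sandwich c (sandwich x (sandwich c y)).
Proof. by rewrite /sandwich !mulrA. Qed.

Section Involution.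
Variable c : R.
Hypothesis c2 : c * c = 1.

Lemma sandwich1 : sandwich c 1 = 1.
Proof. by rewrite /sandwich mulr1 c2. Qed.

Lemma sandwichM x y : sandwich c (x * y) = sandwich c x * sandwich c y.
Proof. by rewrite /sandwich !mulrA -[c * x * c * c]mulrA c2 mulr1. Qed.

Lemma sandwichK x : sandwich c (sandwich c x) = x.
Proof. by rewrite /sandwich !mulrA c2 mul1r -mulrA c2 mulr1. Qed.

Lemma sandwichS x y :
  sandwich c (sandwich x y) = sandwich (sandwich c x) (sandwich c y).
Proof. by rewrite [sandwich x y]/sandwich !sandwichM. Qed.

Lemma acomm_sandwich x y :
  acomm (sandwich c x) (sandwich c y) = sandwich c (acomm x y).
Proof. by rewrite /acomm -!sandwichM /sandwich mulrDr mulrDl. Qed.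

Lemma sandwich_acomm x : acomm c x = 0 -> sandwich c x = - x.
Proof. by move/acomm_swap=> cx; rewrite /sandwich cx mulNr -mulrA c2 mulr1. Qed.

Lemma acomm_sandwich_self y : acomm c (sandwich c y) = acomm c y.
Proof. by rewrite /acomm /sandwich !mulrA c2 mul1r -mulrA c2 mulr1 addrC. Qed.

End Involution.
End Sandwich.

Section Generators.
Variables (n : nat) (A : algType algC) (t : nat -> A).
Hypothesis rels : A_rels n t.
Local Notation tau := (tauA t).

Lemma gen_invol k : (1 <= k)%N -> (k <= n.-1)%N -> t k * t k = 1.
Proof. by case: rels => h _ _; apply: h. Qed.

Lemma gen_braid k : (1 <= k)%N -> (k < n.-1)%N ->
  sandwich (t k) (t k.+1) = sandwich (t k.+1) (t k).
Proof.
move=> k1 kn; case: rels => _ h3 _.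
have cube : t k * t k.+1 * t k * t k.+1 * t k * t k.+1 = 1.
  by have := h3 k k1 kn; rewrite !exprS expr0 mulr1 !mulrA.
have sq : sandwich (t k.+1) (t k) * sandwich (t k.+1) (t k) = 1.
  have u2 := gen_invol (ltn0Sn k) kn.
  by rewrite -(sandwichM u2) gen_invol ?(sandwich1 u2) // ltnW.
by rewrite /sandwich -[LHS]mulr1 -sq /sandwich !mulrA cube mul1r.
Qed.

Lemma gen_acomm k l : (1 <= k)%N -> (k.+1 < l)%N -> (l <= n.-1)%N ->
  acomm (t k) (t l) = 0.
Proof.
move=> k1 kl ln; case: rels => _ _ h2.
have kn : (k <= n.-1)%N by rewrite (leq_trans _ ln) // ltnW // ltnW.
have l1 : (1 <= l)%N by rewrite (leq_trans k1) // ltnW // ltnW.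
have sq : t k * t l * t k * t l = -1.
  by rewrite -(h2 k l k1 kn l1 ln (or_introl kl)) expr2 mulrA.
have : t k * t l * t k * t l * (t l * t k) = - (t l * t k).
  by rewrite !mulrA sq mulN1r mulNr.
rewrite !mulrA -[_ * t l * t l]mulrA gen_invol // mulr1 -mulrA gen_invol // mulr1.
by rewrite /acomm => ->; rewrite addNr.
Qed.

Lemma tau_base j : tau j j.+1 = t j.
Proof. by rewrite /tauA ltnSn subSnn. Qed.

Lemma tau_rec j m : (j < m)%N -> tau j m.+1 = - sandwich (tau j m) (t m).
Proof.
move=> jm; rewrite /tauA jm ltnS (ltnW jm) subSn ?(ltnW jm) //=.
have mj : (0 < m - j)%N by rewrite subn_gt0.
by rewrite -{1}(prednK mj) /= (prednK mj) subnKC // ltnW.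
Qed.

Lemma tau_invol j m : (1 <= j)%N -> (j < m)%N -> (m <= n)%N ->
  tau j m * tau j m = 1.
Proof.
move=> j1; elim: m => // m IH; rewrite ltnS leq_eqVlt => /predU1P[<- | jm] mn.
  by rewrite tau_base gen_invol // -ltnS (leq_trans mn) // leqSpred.
have T2 := IH jm (ltnW mn).
have mn1 : (m <= n.-1)%N by rewrite -ltnS (leq_trans mn) // leqSpred.
rewrite tau_rec // mulrNN -(sandwichM T2) gen_invol ?(sandwich1 T2) //.
exact: leq_trans j1 (ltnW jm).
Qed.

(* tau_{jm} involves only t_j, ..., t_{m-1}, so it anticommutes with t_l, l > m. *)
Lemma tau_acomm j m l : (1 <= j)%N -> (j < m)%N -> (m < l)%N -> (l <= n.-1)%N ->
  acomm (t l) (tau j m) = 0.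
Proof.
move=> j1; elim: m => // m IH; rewrite ltnS leq_eqVlt => /predU1P[<- | jm] ml ln.
  by rewrite tau_base acommC gen_acomm.
rewrite tau_rec // acommNr acomm_sandwich_of_acomm ?oppr0 ?IH // ?(ltnW ml) //.
by rewrite acommC gen_acomm // (leq_trans j1 (ltnW jm)).
Qed.

Lemma tau_braid j m : (1 <= j)%N -> (j < m)%N -> (m <= n.-1)%N ->
  sandwich (tau j m) (t m) = sandwich (t m) (tau j m).
Proof.
move=> j1; elim: m => // m IH; rewrite ltnS leq_eqVlt => /predU1P[<- | jm] m1n.
  by rewrite tau_base gen_braid.
have mn : (m <= n.-1)%N := ltnW m1n.
have m1 : (1 <= m)%N := leq_trans j1 (ltnW jm).
have T2 : tau j m * tau j m = 1 by rewrite tau_invol // (leq_trans mn) ?leq_pred.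
have u2 : t m.+1 * t m.+1 = 1 by rewrite gen_invol.
have uT : acomm (t m.+1) (tau j m) = 0 by rewrite tau_acomm.
have br := gen_braid m1 m1n.
rewrite tau_rec // IH // sandwichNl sandwichN.
rewrite sandwich_sandwich br (sandwichS T2) (sandwich_acomm T2) 1?acommC //.
rewrite sandwichNl IH // -sandwich_sandwich br sandwich_sandwich.
by rewrite (sandwich_acomm u2 uT) !sandwichN.
Qed.

Lemma tau_next j m : (1 <= j)%N -> (j < m)%N -> (m <= n.-1)%N ->
  tau j m.+1 = - sandwich (t m) (tau j m).
Proof. by move=> j1 jm mn; rewrite tau_rec // tau_braid. Qed.

Lemma tau_acomm_next j k m : (1 <= j)%N -> (1 <= k)%N -> j != k ->
  (j < m)%N -> (k < m)%N -> (m <= n.-1)%N ->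
  acomm (tau j m) (sandwich (t m) (tau k m)) = 0.
Proof.
move=> j1 k1 jk; elim: m => // m IH jm1 km1 m1n.
have mn : (m <= n.-1)%N := ltnW m1n.
have m1 : (1 <= m)%N by move: jm1; rewrite ltnS => /(leq_trans j1).
have s2 : t m * t m = 1 by rewrite gen_invol.
have u2 : t m.+1 * t m.+1 = 1 by rewrite gen_invol.
have br := gen_braid m1 m1n.
move: jm1 km1; rewrite !ltnS leq_eqVlt => /predU1P[ej | jm];
  rewrite leq_eqVlt => /predU1P[ek | km].
- by rewrite ej ek eqxx in jk.
- have s_eq : t m = sandwich (t m.+1) (sandwich (t m) (t m.+1)).
    by rewrite br (sandwichK u2).
  rewrite ej tau_base (tau_next k1 km mn) sandwichN acommNr {1}s_eq.
  by rewrite (acomm_sandwich u2) (acomm_sandwich s2) tau_acomm // !sandwich0 oppr0.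
- rewrite ek tau_base (tau_next j1 jm mn) -br acommNl (acomm_sandwich s2).
  by rewrite acommC tau_acomm // sandwich0 oppr0.
have uT i : (1 <= i)%N -> (i < m)%N -> sandwich (t m.+1) (tau i m) = - tau i m.
  by move=> i1 im; rewrite (sandwich_acomm u2) ?tau_acomm.
have twist : sandwich (t m) (sandwich (t m.+1) (sandwich (t m) (tau k m))) =
             - sandwich (t m.+1) (sandwich (t m) (tau k m)).
  by rewrite -sandwich_sandwich br sandwich_sandwich uT // !sandwichN.
rewrite (tau_next j1 jm mn) (tau_next k1 km mn) sandwichN acommNl acommNr opprK.
rewrite -[X in acomm _ X](sandwichK s2) (acomm_sandwich s2) twist acommNr.
rewrite -[tau j m]opprK -uT // acommNl (acomm_sandwich u2) IH //.
by rewrite sandwich0 !oppr0 sandwich0.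
Qed.

Lemma pi_next i : (1 <= i)%N -> (i <= n.-1)%N ->
  piA t i.+1 = t i - sandwich (t i) (piA t i).
Proof.
move=> i1 in1; rewrite /piA big_nat_recr //= tau_base addrC sandwich_sum -sumrN.
by congr (_ + _); apply: eq_big_nat => j /andP[j1 ji]; rewrite tau_next.
Qed.

(* pi_i and pi_{i+1} anticommute: in {pi_i, t_i pi_i t_i} only the diagonal
   terms {tau_{ji}, t_i tau_{ji} t_i} = {tau_{ji}, t_i} survive. *)
Lemma pi_acomm i : (1 <= i)%N -> (i <= n.-1)%N -> acomm (piA t i) (piA t i.+1) = 0.
Proof.
move=> i1 in1; apply/eqP; rewrite pi_next // acommBr subr_eq0; apply/eqP.
rewrite {1 2}/piA !acomm_suml; apply: eq_big_nat => j /andP[j1 ji].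
have T2 : tau j i * tau j i = 1 by rewrite tau_invol // (leq_trans in1) ?leq_pred.
rewrite /piA sandwich_sum acomm_sumr (bigD1_seq j) ?mem_index_iota ?j1 ?iota_uniq //=.
rewrite big1_seq ?addr0 -?tau_braid ?(acomm_sandwich_self T2) //.
move=> k /andP[kj]; rewrite mem_index_iota => /andP[k1 ki].
by rewrite tau_acomm_next // eq_sym.
Qed.

End Generators.

Section InvolutionPair.
Variables (R : pzRingType) (s p q : R).
Hypotheses (s2 : s * s = 1) (q_def : q = s - sandwich s p) (pq : acomm p q = 0).
Local Notation D := (p ^+ 2 - q ^+ 2).
Local Notation F := (s * D + (q - p)).

Lemma pair_sp_qs : s * p + q * s = 1.
Proof. by rewrite q_def mulrBl s2 /sandwich -[_ * s * s]mulrA s2 mulr1 addrC subrK. Qed.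

(* The same relation conjugated by s. *)
Lemma pair_ps_sq : p * s + s * q = 1.
Proof.
have := congr1 (sandwich s) pair_sp_qs.
by rewrite (sandwich1 s2) /sandwich mulrDr mulrDl !mulrA s2 mul1r -!mulrA s2 mulr1.
Qed.

Lemma pair_diff_comm : (p - q) * s = s * (p - q).
Proof.
have ps : p * s = 1 - s * q by rewrite -pair_ps_sq addrK.
have qs : q * s = 1 - s * p by rewrite -pair_sp_qs addrAC subrr add0r.
by rewrite mulrBl mulrBr ps qs opprB addrC addrA subrK.
Qed.

Lemma pair_sqdiff_acomm : acomm D s = 2%:R * (p - q).
Proof.
have p2s := sq_twist pair_ps_sq.
have q2s : q ^+ 2 * s = q - p + s * p ^+ 2.
  by apply: sq_twist; rewrite addrC pair_sp_qs.
rewrite /acomm mulrBl [s * _]mulrBr p2s q2s -[q - p]opprB opprD opprK.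
by rewrite -addrA subrKA addrACA subrr addr0 mulr_natl mulr2n.
Qed.

Lemma pair_sqdiff_comm_p : D * p = p * D.
Proof. by rewrite mulrBl mulrBr -exprSr -exprS sq_comm_of_acomm // acommC. Qed.

Lemma pair_sqdiff_comm_q : D * q = q * D.
Proof. by rewrite mulrBl mulrBr -exprSr -exprS sq_comm_of_acomm. Qed.

Lemma pair_F_p : F * p + q * F = 0.
Proof.
rewrite [_ * p]mulrDl [q * _]mulrDr -mulrA pair_sqdiff_comm_p !mulrA addrACA.
by rewrite -mulrDl pair_sp_qs mul1r diff_sq_l -[q ^+ 2 - _]opprB subrr.
Qed.

Lemma pair_F_q : F * q + p * F = 0.
Proof.
rewrite [_ * q]mulrDl [p * _]mulrDr -mulrA pair_sqdiff_comm_q !mulrA addrACA.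
by rewrite -mulrDl [s * q + _]addrC pair_ps_sq mul1r diff_sq_r -[q ^+ 2 - _]opprB subrr.
Qed.

(* With d = p - q: (s D)^2 = 2 s d D - D^2 and {s D, d} = 2 s d D, while
   d^2 = p^2 + q^2, so F^2 = (s D - d)^2 = p^2 + q^2 - D^2. *)
Lemma pair_F_sq : F ^+ 2 = p ^+ 2 + q ^+ 2 - D ^+ 2.
Proof.
have Dd : D * (p - q) = (p - q) * D.
  by rewrite mulrBr mulrBl pair_sqdiff_comm_p pair_sqdiff_comm_q.
have dd : (p - q) ^+ 2 = p ^+ 2 + q ^+ 2 by apply: sqrB_acomm.
have Ds : D * s = 2%:R * (p - q) - s * D by rewrite -pair_sqdiff_acomm /acomm addrK.
rewrite -[q - p]opprB; move: Dd dd Ds pair_diff_comm.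
set d := p - q => Dd dd Ds ds.
have Xd : s * D * d = s * d * D by rewrite -mulrA Dd mulrA.
have dX : d * (s * D) = s * d * D by rewrite mulrA ds.
have XX : s * D * (s * D) = s * d * D *+ 2 - D ^+ 2.
  rewrite mulrA -(mulrA s D s) Ds [s * (_ - _)]mulrBr [s * (s * D)]mulrA s2 mul1r.
  by rewrite mulrBl -expr2 mulr_natl mulrnAr mulrnAl.
rewrite expr2 (mulrBl (s * D - d)) (mulrBr (s * D)) (mulrBr d) XX Xd dX -expr2 dd.
set a := s * d * D; set P := p ^+ 2 + q ^+ 2.
by rewrite mulr2n [a + a - _ - a]addrAC addrK opprB [_ + (P - a)]addrC subrKA.
Qed.

Lemma involution_pair_identities :
  [/\ s * p + q * s = 1,
      (p - q) * s = s * (p - q),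
      D * s + s * D = 2%:R * (p - q) &
      [/\ F * p + q * F = 0,
           F * q + p * F = 0 &
           F ^+ 2 = p ^+ 2 + q ^+ 2 - D ^+ 2]].
Proof.
split; [exact: pair_sp_qs | exact: pair_diff_comm | exact: pair_sqdiff_acomm |].
by split; [exact: pair_F_p | exact: pair_F_q | exact: pair_F_sq].
Qed.

End InvolutionPair.

Theorem mainTheorem18 (n : nat) (A : algType algC) (t : nat -> A)
  (Hrel : A_rels n t) (i : nat) (Hi1 : (1 <= i)%N) (Hi2 : (i <= n.-1)%N) :
  let p := piA t i in
  let q := piA t i.+1 in
  let F := t i * (p ^+ 2 - q ^+ 2) + (q - p) in
  [/\ t i * p + q * t i = 1,
      (p - q) * t i = t i * (p - q),
      (p ^+ 2 - q ^+ 2) * t i + t i * (p ^+ 2 - q ^+ 2) = 2%:R * (p - q) &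
      [/\ F * p + q * F = 0,
           F * q + p * F = 0 &
           F ^+ 2 = p ^+ 2 + q ^+ 2 - (p ^+ 2 - q ^+ 2) ^+ 2]].
Proof.
move=> p q F.
have ti2 : t i * t i = 1 := gen_invol Hrel Hi1 Hi2.
have q_def : q = t i - sandwich (t i) p := pi_next Hrel Hi1 Hi2.
have pq : acomm p q = 0 := pi_acomm Hrel Hi1 Hi2.
exact: involution_pair_identities ti2 q_def pq.
Qed.
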